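(* Let $(A,\cdot,\alpha)$ be a Hom-Malcev algebra over a field $\mathbb{K}$ of characteristic $0$. Then the identity $$J_{\alpha}(w\cdot x,\alpha(y),\alpha(z)) = J_{\alpha}(w,y,z)\cdot\alpha^{2}(x) + \alpha^{2}(w)\cdot J_{\alpha}(x,y,z) - 2J_{\alpha}(y\cdot z,\alpha(w),\alpha(x)) \qquad (\ast)$$ holds for all $w,x,y,z\in A$. Moreover, in any anticommutative multiplicative Hom-algebra $(A,\cdot,\alpha)$ over $\mathbb{K}$, the identity $(\ast)$ (for all $w,x,y,z\in A$) is equivalent to the Hom-Malcev identity $$J_{\alpha}(\alpha(x),\alpha(y),x\cdot z) = J_{\alpha}(x,y,z)\cdot\alpha^{2}(x)$$ for all $x,y,z\in A$.
   Context: A (multiplicative) Hom-algebra is a triple $(A,\cdot,\alpha)$ where $A$ is a vector space over a field $\mathbb{K}$ of characteristic $0$, $\cdot:A\times A\to A$ is bilinear (written $xy$ or $x\cdot y$), and $\alpha:A\to A$ is linear with $\alpha(x\cdot y)=\alpha(x)\cdot\alpha(y)$ for all $x,y$. It is anticommutative if $x\cdot y=-y\cdot x$ for all $x,y$. The Hom-Jacobian is $J_{\alpha}(x,y,z)=xy\cdot\alpha(z)+yz\cdot\alpha(x)+zx\cdot\alpha(y)$, where $xy\cdot\alpha(z)$ means $(x\cdot y)\cdot\alpha(z)$. A Hom-Malcev algebra is an anticommutative multiplicative Hom-algebra satisfying $J_{\alpha}(\alpha(x),\alpha(y),x\cdot z)=J_{\alpha}(x,y,z)\cdot\alpha^{2}(x)$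 for all $x,y,z\in A$. *)

From HB Require Import structures.
From mathcomp Require Import all_boot all_order all_algebra.
Set Implicit Arguments. Unset Strict Implicit. Unset Printing Implicit Defensive.
Import GRing.Theory.
Local Open Scope ring_scope.

Definition bilinear_mul (K : fieldType) (A : lmodType K) (mul : A -> A -> A) : Prop :=
  (forall (a : K) (x y z : A), mul (a *: x + y) z = a *: mul x z + mul y z) /\
  (forall (a : K) (x y z : A), mul z (a *: x + y) = a *: mul z x + mul z y).

Definition linear_map (K : fieldType) (A : lmodType K) (alpha : A -> A) : Prop :=
  forall (a : K) (x y : A), alpha (a *: x + y) = a *: alpha x + alpha y.

Definition hom_multiplicative {A : Type} (mul : A -> A -> A) (alpha : A -> A) : Prop :=
  forall x y, alpha (mul x y) = mul (alpha x) (alpha y).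

Definition anticommutative (K : fieldType) (A : lmodType K) (mul : A -> A -> A) : Prop :=
  forall x y : A, mul x y = - mul y x.

Definition homJac (K : fieldType) (A : lmodType K) (mul : A -> A -> A) (alpha : A -> A)
  (x y z : A) : A :=
  mul (mul x y) (alpha z) + mul (mul y z) (alpha x) + mul (mul z x) (alpha y).

Definition homMalcev_identity (K : fieldType) (A : lmodType K) (mul : A -> A -> A)
  (alpha : A -> A) : Prop :=
  forall x y z : A,
    homJac mul alpha (alpha x) (alpha y) (mul x z) = mul (homJac mul alpha x y z) (alpha (alpha x)).

Definition is_HomMalcev (K : fieldType) (A : lmodType K) (mul : A -> A -> A)
  (alpha : A -> A) : Prop :=
  anticommutative mul /\ hom_multiplicative mul alpha /\ homMalcev_identity mul alpha.

Definition identity_star (K : fieldType) (A : lmodType K) (mul : A -> A -> A)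
  (alpha : A -> A) : Prop :=
  forall w x y z : A,
    homJac mul alpha (mul w x) (alpha y) (alpha z) =
      mul (homJac mul alpha w y z) (alpha (alpha x))
      + mul (alpha (alpha w)) (homJac mul alpha x y z)
      - (homJac mul alpha (mul y z) (alpha w) (alpha x)) *+ 2.

(* Every Hom-Jacobian term occurring below, such as J(αa, αb, cd), J(ab, αc, αd)
   or J(a, b, c)·α²d, is by anticommutativity and multiplicativity of α a signed sum
   of degree-four monomials of the two shapes (αa·bc)·α²d and α(ab)·α(cd).  After
   this expansion both implications become identities between integer
   combinations of such monomials.  Polarizing the Hom-Malcev identity in x gives
   a four-variable identity, and twice (∗) is a sum of four of its instances;
   conversely three times the Hom-Malcev identity at (x, y, z) equals
   2 (∗)(x, y, x, z) - (∗)(x, z, x, y).  Characteristic 0 cancels the factors 2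
   and 3, and makes anticommutativity equivalent to xx = 0. *)

From HB Require Import structures.
From mathcomp Require Import all_boot all_order all_algebra.
From mathcomp Require Import ring.

Set Implicit Arguments.
Unset Strict Implicit.
Unset Printing Implicit Defensive.

Import GRing.Theory.
Local Open Scope ring_scope.

(* The square-zero extension of int by an abelian group V: injecting V into this
   commutative ring lets [ring] decide int-linear identities in V. *)
Definition zext (V : zmodType) := (V * int)%type.
HB.instance Definition _ (V : zmodType) := GRing.Zmodule.on (zext V).

Section TrivialExtension.
Variable V : zmodType.

Definition zext_mul (p q : zext V) : zext V := (p.1 *~ q.2 + q.1 *~ p.2, p.2 * q.2).
Definition zext_one : zext V := (0, 1).

Lemma zext_mulA : associative zext_mul.
Proof.
move=> [a m] [b n] [c k]; rewrite /zext_mul /=; congr (_, _); last exact: mulrA.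
by rewrite !mulrzDl -!mulrzA ![_ * m]mulrC ![_ * n]mulrC addrA.
Qed.

Lemma zext_mulC : commutative zext_mul.
Proof. by move=> [a m] [b n]; rewrite /zext_mul /= addrC mulrC. Qed.

Lemma zext_mul1 : left_id zext_one zext_mul.
Proof. by move=> [a m]; rewrite /zext_mul /= mul0rz add0r mulr1z mul1r. Qed.

Lemma zext_mulDl : left_distributive zext_mul +%R.
Proof.
move=> [a m] [b n] [c k]; rewrite /zext_mul /=; congr (_, _); last exact: mulrDl.
by rewrite mulrzDr mulrzDl addrACA.
Qed.

Lemma zext_one_neq0 : zext_one != 0.
Proof. by apply/eqP; case. Qed.

HB.instance Definition _ := GRing.Zmodule_isComNzRing.Build (zext V)
  zext_mulA zext_mulC zext_mul1 zext_mulDl zext_one_neq0.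

Definition zext_in (v : V) : zext V := (v, 0).

Lemma zext_in_is_zmod_morphism : zmod_morphism zext_in.
Proof. by move=> a b; congr (_, _); rewrite subr0. Qed.

HB.instance Definition _ := GRing.isZmodMorphism.Build V (zext V) zext_in
  zext_in_is_zmod_morphism.

Lemma zext_in_inj : injective zext_in.
Proof. by move=> a b []. Qed.

End TrivialExtension.

Ltac zmod_ring := apply: zext_in_inj; ring.

Lemma pchar0_mulrSn_eq0 (K : fieldType) (A : lmodType K) :
  [pchar K] =i pred0 -> forall (n : nat) (v : A), (v *+ n.+1 == 0) = (v == 0).
Proof. by move=> /pcharf0P K0 n v; rewrite -scaler_nat scaler_eq0 K0. Qed.

Lemma anticommutative_mulxx (K : fieldType) (A : lmodType K) (mul : A -> A -> A) :
  [pchar K] =i pred0 -> anticommutative mul -> forall u, mul u u = 0.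
Proof.
move=> K0 anti u; apply/eqP; rewrite -(pchar0_mulrSn_eq0 K0 1).
by rewrite mulr2n {1}anti addNr.
Qed.

Section HomAlgebra.
Variables (K : fieldType) (A : lmodType K) (mul : A -> A -> A) (alpha : A -> A).
Hypotheses (mulDl : left_distributive mul +%R) (mulDr : right_distributive mul +%R).
Hypothesis mulxx : forall u, mul u u = 0.
Hypothesis alphaD : {morph alpha : u v / u + v}.
Hypothesis alphaM : {morph alpha : u v / mul u v}.

Local Notation J := (homJac mul alpha).

Lemma mul0l u : mul 0 u = 0.
Proof. by apply: (addrI (mul 0 u)); rewrite -mulDl !addr0. Qed.

Lemma mul0r u : mul u 0 = 0.
Proof. by apply: (addrI (mul u 0)); rewrite -mulDr !addr0. Qed.

Lemma mulNl u v : mul (- u) v = - mul u v.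
Proof. by apply/eqP; rewrite -addr_eq0 -mulDl addNr mul0l. Qed.

Lemma mulNr u v : mul u (- v) = - mul u v.
Proof. by apply/eqP; rewrite -addr_eq0 -mulDr addNr mul0r. Qed.

Lemma mul_anticomm u v : mul u v = - mul v u.
Proof.
apply/eqP; rewrite -addr_eq0.
by have := mulxx (u + v); rewrite mulDl !mulDr !mulxx add0r addr0 => ->.
Qed.

Lemma alpha0 : alpha 0 = 0.
Proof. by apply: (addrI (alpha 0)); rewrite -alphaD !addr0. Qed.

Lemma alphaN : {morph alpha : u / - u}.
Proof. by move=> u; apply/eqP; rewrite -addr_eq0 -alphaD addNr alpha0. Qed.

Lemma homJacDl a b c d : J (a + b) c d = J a c d + J b c d.
Proof. by rewrite /homJac alphaD mulDl !mulDr !mulDl; zmod_ring. Qed.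

Lemma homJacDr a b c d : J a b (c + d) = J a b c + J a b d.
Proof. by rewrite /homJac alphaD mulDl !mulDr !mulDl; zmod_ring. Qed.

Definition monoT a b c d := mul (mul (alpha a) (mul b c)) (alpha (alpha d)).
Definition monoP a b c d := mul (alpha (mul a b)) (alpha (mul c d)).

Lemma monoT_swap a b c d : monoT a c b d = - monoT a b c d.
Proof. by rewrite /monoT [mul c b]mul_anticomm mulNr mulNl. Qed.

Lemma monoT_diag a b d : monoT a b b d = 0.
Proof. by rewrite /monoT mulxx mul0r mul0l. Qed.

Lemma monoP_swapl a b c d : monoP b a c d = - monoP a b c d.
Proof. by rewrite /monoP [mul b a]mul_anticomm alphaN mulNl. Qed.

Lemma monoP_swapr a b c d : monoP a b d c = - monoP a b c d.
Proof. by rewrite /monoP [mul d c]mul_anticomm alphaN mulNr. Qed.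

Lemma monoP_swap a b c d : monoP c d a b = - monoP a b c d.
Proof. exact: mul_anticomm. Qed.

Lemma monoP_diagl a c d : monoP a a c d = 0.
Proof. by rewrite /monoP mulxx alpha0 mul0l. Qed.

Lemma monoP_diagr a b c : monoP a b c c = 0.
Proof. by rewrite /monoP mulxx alpha0 mul0r. Qed.

Lemma monoP_self a b : monoP a b a b = 0.
Proof. exact: mulxx. Qed.

Lemma homJac_alpha_mul a b c d :
  J (alpha a) (alpha b) (mul c d) = monoP a b c d + monoT b c d a - monoT a c d b.
Proof. by rewrite /homJac /monoP /monoT -(alphaM a b) [mul (mul c d) _]mul_anticomm mulNl. Qed.

Lemma homJac_mul_alpha a b c d :
  J (mul a b) (alpha c) (alpha d) = monoP c d a b + monoT d a b c - monoT c a b d.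
Proof.
rewrite /homJac /monoP /monoT -(alphaM c d) [mul (mul a b) _]mul_anticomm mulNl.
by zmod_ring.
Qed.

Lemma homJac_mul_alpha2 a b c d :
  mul (J a b c) (alpha (alpha d)) = - (monoT c a b d + monoT a b c d + monoT b c a d).
Proof.
rewrite /homJac /monoT !mulDl [mul (mul a b) _]mul_anticomm [mul (mul b c) _]mul_anticomm.
by rewrite [mul (mul c a) _]mul_anticomm !mulNl !opprD.
Qed.

Lemma alpha2_mul_homJac a b c d :
  mul (alpha (alpha d)) (J a b c) = monoT c a b d + monoT a b c d + monoT b c a d.
Proof. by rewrite mul_anticomm homJac_mul_alpha2 opprK. Qed.

Ltac var_rank t w x y z :=
  lazymatch t with w => constr:(0%N) | x => constr:(1%N)
  | y => constr:(2%N) | z => constr:(3%N) end.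

Ltac var_lt s t w x y z :=
  let i := var_rank s w x y z in let j := var_rank t w x y z in
  let b := eval compute in (i < j)%N in
  lazymatch b with true => idtac end.

(* Puts every monomial in normal form for the variable order w < x < y < z, so that
   equal monomials become syntactically equal atoms for [zmod_ring]. *)
Ltac canon_monos w x y z :=
  repeat match goal with
  | |- context [monoT ?a ?b ?b ?d] => rewrite (monoT_diag a b d)
  | |- context [monoT ?a ?b ?c ?d] => var_lt c b w x y z; rewrite (monoT_swap a c b d)
  | |- context [monoP ?a ?a ?c ?d] => rewrite (monoP_diagl a c d)
  | |- context [monoP ?a ?b ?c ?c] => rewrite (monoP_diagr a b c)
  | |- context [monoP ?a ?b ?a ?b] => rewrite (monoP_self a b)
  | |- context [monoP ?a ?b ?c ?d] => var_lt b a w x y z; rewrite (monoP_swapl b a c d)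
  | |- context [monoP ?a ?b ?c ?d] => var_lt d c w x y z; rewrite (monoP_swapr a b d c)
  | |- context [monoP ?a ?b ?c ?d] => var_lt c a w x y z; rewrite (monoP_swap c d a b)
  | |- context [monoP ?a ?b ?a ?d] => var_lt d b w x y z; rewrite (monoP_swap a d a b)
  end.

Ltac expand_monos := rewrite ?homJac_alpha_mul ?homJac_mul_alpha
  ?homJac_mul_alpha2 ?alpha2_mul_homJac.

Definition malcev_defect x y z :=
  J (alpha x) (alpha y) (mul x z) - mul (J x y z) (alpha (alpha x)).

Definition star_defect w x y z :=
  J (mul w x) (alpha y) (alpha z) -
  (mul (J w y z) (alpha (alpha x)) + mul (alpha (alpha w)) (J x y z)
   - J (mul y z) (alpha w) (alpha x) *+ 2).

Definition malcev_polar w x y z :=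
  malcev_defect (w + x) y z - malcev_defect w y z - malcev_defect x y z.

Lemma malcev_polarE w x y z :
  malcev_polar w x y z =
  J (alpha w) (alpha y) (mul x z) + J (alpha x) (alpha y) (mul w z)
  - mul (J x y z) (alpha (alpha w)) - mul (J w y z) (alpha (alpha x)).
Proof.
rewrite /malcev_polar /malcev_defect !alphaD mulDl homJacDl !homJacDr homJacDl.
by rewrite mulDl !mulDr; zmod_ring.
Qed.

Lemma star_defect_polar w x y z :
  star_defect w x y z *+ 2 =
  malcev_polar w x y z + malcev_polar w y x z *+ 2
  + malcev_polar w y z x - malcev_polar w z x y.
Proof.
rewrite /star_defect !malcev_polarE; expand_monos; canon_monos w x y z.
zmod_ring.
Qed.

Lemma malcev_defect_star x y z :
  malcev_defect x y z *+ 3 = star_defect x y x z *+ 2 - star_defect x z x y.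
Proof.
rewrite /star_defect /malcev_defect; expand_monos; canon_monos x y z z.
zmod_ring.
Qed.

Hypothesis K0 : [pchar K] =i pred0.

Lemma homMalcev_identity_star :
  homMalcev_identity mul alpha -> identity_star mul alpha.
Proof.
move=> malcev w x y z; apply/eqP; rewrite -subr_eq0 -(pchar0_mulrSn_eq0 K0 1).
have defect0 a b c : malcev_defect a b c = 0 by rewrite /malcev_defect malcev subrr.
rewrite -[_ - _]/(star_defect w x y z) star_defect_polar /malcev_polar !defect0.
by rewrite !subrr mul0rn !addr0 subrr.
Qed.

Lemma identity_star_homMalcev :
  identity_star mul alpha -> homMalcev_identity mul alpha.
Proof.
move=> star x y z; apply/eqP; rewrite -subr_eq0 -(pchar0_mulrSn_eq0 K0 2).
have defect0 a b c d : star_defect a b c d = 0 by rewrite /star_defect star subrr.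
by rewrite -[_ - _]/(malcev_defect x y z) malcev_defect_star !defect0 mul0rn subrr.
Qed.

End HomAlgebra.

Theorem mainTheorem1 (K : fieldType) (A : lmodType K)
  (mul : A -> A -> A) (alpha : A -> A) :
  [pchar K] =i pred0 ->
  bilinear_mul mul -> linear_map alpha ->
  (is_HomMalcev mul alpha -> identity_star mul alpha) /\
  (anticommutative mul -> hom_multiplicative mul alpha ->
     (identity_star mul alpha <-> homMalcev_identity mul alpha)).
Proof.
move=> K0 [linl linr] lin.
have mulDl : left_distributive mul +%R by move=> u v t; rewrite -[u]scale1r linl !scale1r.
have mulDr : right_distributive mul +%R by move=> t u v; rewrite -[u]scale1r linr !scale1r.
have alphaD : {morph alpha : u v / u + v} by move=> u v; rewrite -[u]scale1r lin !scale1r.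
have star_iff_malcev : anticommutative mul -> hom_multiplicative mul alpha ->
    identity_star mul alpha <-> homMalcev_identity mul alpha.
  move=> anti alphaM; have mulxx := anticommutative_mulxx K0 anti.
  split; first exact: (identity_star_homMalcev mulDl mulDr mulxx alphaM K0).
  exact: (homMalcev_identity_star mulDl mulDr mulxx alphaD alphaM K0).
split; last exact: star_iff_malcev.
by case=> anti [alphaM /(star_iff_malcev anti alphaM)].
Qed.
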